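(* Let $G$ be a finitely generated torsion-free nilpotent group and suppose the decomposition $\overline{G}=R_1\times R_2$ into rational subgroups matches the decomposition $G=G_1\times G_2$. Then $\overline{G}=R_1\times R_2$ gives rise to a decomposition of $G/Z(G)$; that is, with $X_i=R_iZ(\overline{G})\cap G$, we have $G=X_1X_2$, $[X_1,X_2]=1$ and $X_1\cap X_2=Z(G)$.
   Context: $\overline{G}$ is the rational closure of $G$ (torsion-free nilpotent, containing $G$, uniquely divisible, each element has a positive power in $G$); for $H\le G$, $\overline{H}$ is the set of elements of $\overline{G}$ having a positive power in $H$. A subgroup is rational if closed under taking all $n$-th roots. A decomposition $\overline{G}=R_1\times R_2$ matches $G=G_1\times G_2$ if $\overline{G_i}\,Z(\overline{G})=R_i\,Z(\overline{G})$ for $i=1,2$. *)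

From Stdlib Require Import List Arith.

Record group := Group {
  car :> Type;
  mul : car -> car -> car;
  inv : car -> car;
  one : car;
  mulA : forall x y z, mul x (mul y z) = mul (mul x y) z;
  mul1g : forall x, mul one x = x;
  mulVg : forall x, mul (inv x) x = one
}.

Arguments mul {g}.
Arguments inv {g}.
Arguments one {g}.

Section GroupDefs.
Variable T : group.

Definition gset := T -> Prop.

Definition seteq (A B : gset) : Prop := forall x, A x <-> B x.
Definition subset (A B : gset) : Prop := forall x, A x -> B x.

Definition is_subgroup (H : gset) : Prop :=
  H one /\ (forall x y, H x -> H y -> H (mul x y)) /\ (forall x, H x -> H (inv x)).

Fixpoint gpow (x : T) (n : nat) : T :=
  match n with 0 => one | S k => mul (gpow x k) x end.

Definition comm (x y : T) : T := mul (mul (mul (inv x) (inv y)) x) y.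

Definition generated (S : gset) : gset :=
  fun x => forall K, is_subgroup K -> subset S K -> K x.

Definition prodset (A B : gset) : gset :=
  fun x => exists a b, A a /\ B b /\ x = mul a b.

Definition setI (A B : gset) : gset := fun x => A x /\ B x.

Definition center (H : gset) : gset :=
  fun z => H z /\ forall h, H h -> mul z h = mul h z.

Definition setT : gset := fun _ => True.

Definition fin_gen (H : gset) : Prop :=
  exists l : list T, seteq H (generated (fun x => In x l)).

Fixpoint lcs (H : gset) (n : nat) : gset :=
  match n with
  | 0 => H
  | S k => generated (fun z => exists x y, lcs H k x /\ H y /\ z = comm x y)
  end.
(* lcs H 0 = gamma_1(H); lcs H c = gamma_{c+1}(H) *)

Definition nilpotent (H : gset) : Prop :=
  exists c, forall x, lcs H c x -> x = one.

Definition torsion_free (H : gset) : Prop :=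
  forall x n, H x -> 0 < n -> gpow x n = one -> x = one.

Definition uniquely_divisible (H : gset) : Prop :=
  forall x n, H x -> 0 < n -> exists y, H y /\ gpow y n = x /\
     (forall y', H y' -> gpow y' n = x -> y' = y).

(* Gbar (the whole ambient group T) is the rational closure of G *)
Definition rational_closure_of (G : gset) : Prop :=
  is_subgroup G /\ torsion_free setT /\ nilpotent setT /\
  uniquely_divisible setT /\
  (forall x, exists n, 0 < n /\ G (gpow x n)).

Definition closure (H : gset) : gset :=
  fun x => exists n, 0 < n /\ H (gpow x n).

Definition rational (R : gset) : Prop :=
  is_subgroup R /\ forall x n, 0 < n -> R (gpow x n) -> R x.

Definition direct_prod (A B C : gset) : Prop :=
  is_subgroup B /\ is_subgroup C /\ subset B A /\ subset C A /\
  (forall a, A a -> exists b c, B b /\ C c /\ a = mul b c) /\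
  (forall b c, B b -> C c -> mul b c = mul c b) /\
  (forall x, B x -> C x -> x = one).

Definition matches (R1 R2 G1 G2 : gset) : Prop :=
  seteq (prodset (closure G1) (center setT)) (prodset R1 (center setT)) /\
  seteq (prodset (closure G2) (center setT)) (prodset R2 (center setT)).

End GroupDefs.

Arguments seteq {T}. Arguments subset {T}. Arguments is_subgroup {T}.
Arguments gpow {T}. Arguments comm {T}. Arguments generated {T}.
Arguments prodset {T}. Arguments setI {T}. Arguments center {T}.
Arguments setT {T}. Arguments fin_gen {T}. Arguments lcs {T}.
Arguments nilpotent {T}. Arguments torsion_free {T}.
Arguments uniquely_divisible {T}. Arguments rational_closure_of {T}.
Arguments closure {T}. Arguments rational {T}. Arguments direct_prod {T}.
Arguments matches {T}.

(* The two factors R1 Z and R2 Z of the centre-enlarged decomposition commute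
   elementwise, and by the matching hypothesis each G_i lies in R_i Z, hence in
   X_i; so G = G1 G2 = X1 X2 and [X1, X2] = 1.  An element of X1 /\ X2 therefore
   commutes with X1 X2 = G, i.e. lies in Z(G).  Conversely Z(G) lies in Z(Gbar):
   if x centralises G and t^n is in G, then x t x^-1 is an n-th root of t^n,
   so unique divisibility forces x t x^-1 = t.  As R_i contains 1, Z(G) is then
   contained in R_i Z(Gbar) /\ G = X_i. *)
From Stdlib Require Import List Arith.

Section GroupFacts.
Variable T : group.

Definition commute (x y : T) : Prop := mul x y = mul y x.

Lemma mulgV (x : T) : mul x (inv x) = one.
Proof.
  rewrite <- (mul1g T (mul x (inv x))).
  rewrite <- (mulVg T (inv x)) at 1.
  rewrite <- mulA, (mulA T (inv x) x (inv x)), mulVg, mul1g.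
  apply mulVg.
Qed.

Lemma mulg1 (x : T) : mul x one = x.
Proof. rewrite <- (mulVg T x), mulA, mulgV. apply mul1g. Qed.

Lemma mulIg (a b c : T) : mul a c = mul b c -> a = b.
Proof.
  intro H. rewrite <- (mulg1 a), <- (mulg1 b), <- (mulgV c), !mulA, H.
  reflexivity.
Qed.

Lemma commute_sym (x y : T) : commute x y -> commute y x.
Proof. unfold commute. auto. Qed.

Lemma commuteMl (a b y : T) :
  commute a y -> commute b y -> commute (mul a b) y.
Proof.
  unfold commute. intros Ha Hb.
  rewrite <- mulA, Hb, mulA, Ha, <- mulA. reflexivity.
Qed.

Lemma comm_eq1 (x y : T) : commute x y -> comm x y = one.
Proof.
  unfold commute, comm. intro H. rewrite <- (mulA T _ x y), H.
  rewrite <- (mulA T (inv x)), (mulA T (inv y) y x), mulVg, mul1g.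
  apply mulVg.
Qed.

Lemma gpow_conjg (x t : T) n :
  gpow (mul (mul x t) (inv x)) n = mul (mul x (gpow t n)) (inv x).
Proof.
  induction n as [|n IH]; simpl.
  - rewrite mulg1, mulgV. reflexivity.
  - rewrite IH, <- (mulA T (mul x (gpow t n))).
    rewrite (mulA T (inv x) (mul x t) (inv x)), (mulA T (inv x) x t).
    rewrite mulVg, mul1g, (mulA T (mul x (gpow t n)) t (inv x)).
    rewrite <- (mulA T x (gpow t n) t). reflexivity.
Qed.

Lemma sub_closure (H : gset T) : subset H (closure H).
Proof. intros x Hx. exists 1. split; [auto | simpl; rewrite mul1g; exact Hx]. Qed.

Lemma center1 (H : gset T) : is_subgroup H -> center H one.
Proof.
  intros [H1 _]. split; [exact H1 |].
  intros h _. rewrite mul1g, mulg1. reflexivity.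
Qed.

Lemma sub_prodset_center (A : gset T) : subset A (prodset A (center setT)).
Proof.
  intros a Aa. exists a, one. split; [exact Aa | split].
  - apply center1. repeat split; exact I.
  - symmetry. apply mulg1.
Qed.

Lemma center_sub_prodset (A : gset T) :
  A one -> subset (center setT) (prodset A (center setT)).
Proof.
  intros A1 z Zz. exists one, z. split; [exact A1 | split; [exact Zz |]].
  symmetry. apply mul1g.
Qed.

Lemma commute_prodset_center (A B : gset T) :
  (forall a b, A a -> B b -> commute a b) ->
  forall x y, prodset A (center setT) x -> prodset B (center setT) y ->
  commute x y.
Proof.
  intros AB x y [a [z [Aa [[_ Zz] ->]]]] [b [w [Bb [[_ Zw] ->]]]].
  apply commuteMl.
  - apply commute_sym, commuteMl.
    + apply commute_sym, AB; assumption.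
    + apply Zw. exact I.
  - apply Zz. exact I.
Qed.

Lemma commute_prodset (x : T) (A B : gset T) :
  (forall a, A a -> commute x a) -> (forall b, B b -> commute x b) ->
  forall y, prodset A B y -> commute x y.
Proof.
  intros xA xB y [a [b [Aa [Bb ->]]]].
  apply commute_sym, commuteMl; apply commute_sym; auto.
Qed.

Lemma center_sub_centerT (G : gset T) :
  uniquely_divisible (@setT T) -> (forall t, exists n, 0 < n /\ G (gpow t n)) ->
  subset (center G) (center setT).
Proof.
  intros Hdiv Hpow x [_ Cx]. split; [exact I |]. intros t _.
  destruct (Hpow t) as [n [Hn Gtn]].
  destruct (Hdiv (gpow t n) n I Hn) as [r [_ [_ Uroot]]].
  assert (Conj : gpow (mul (mul x t) (inv x)) n = gpow t n).
  { rewrite gpow_conjg, (Cx _ Gtn), <- mulA, mulgV, mulg1. reflexivity. }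
  assert (Ext : mul (mul x t) (inv x) = t).
  { rewrite (Uroot _ I Conj). symmetry; exact (Uroot t I eq_refl). }
  apply (mulIg _ _ (inv x)). rewrite Ext, <- mulA, mulgV, mulg1. reflexivity.
Qed.

End GroupFacts.

Arguments commute {T}.

Theorem mainTheorem12 (T : group) (G G1 G2 R1 R2 : T -> Prop) :
  is_subgroup G -> fin_gen G -> torsion_free G -> nilpotent G ->
  rational_closure_of G ->
  rational R1 -> rational R2 ->
  direct_prod setT R1 R2 ->
  direct_prod G G1 G2 ->
  matches R1 R2 G1 G2 ->
  let X1 := setI (prodset R1 (center setT)) G in
  let X2 := setI (prodset R2 (center setT)) G in
  seteq G (prodset X1 X2) /\
  (forall x1 x2, X1 x1 -> X2 x2 -> comm x1 x2 = one) /\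
  seteq (setI X1 X2) (center G).
Proof.
  intros [_ [GM _]] _ _ _ [_ [_ [_ [Hdiv Hpow]]]] [[R1one _] _] [[R2one _] _]
    [_ [_ [_ [_ [_ [R12 _]]]]]] [_ [_ [G1G [G2G [Gdec _]]]]] [M1 M2] X1 X2.
  assert (X12 : forall x1 x2, X1 x1 -> X2 x2 -> commute x1 x2).
  { intros x1 x2 [Hx1 _] [Hx2 _]. exact (commute_prodset_center _ _ _ R12 _ _ Hx1 Hx2). }
  assert (GiXi : forall Gi Ri, subset Gi G ->
            seteq (prodset (closure Gi) (center setT)) (prodset Ri (center setT)) ->
            subset Gi (setI (prodset Ri (center setT)) G)).
  { intros Gi Ri GiG Mi g Gg. split; [| exact (GiG g Gg)].
    apply (proj1 (Mi g)), sub_prodset_center, sub_closure, Gg. }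
  assert (GX : seteq G (prodset X1 X2)).
  { intro g; split.
    - intro Gg. destruct (Gdec g Gg) as [a [b [Ga [Gb E]]]].
      exists a, b. split; [exact (GiXi _ _ G1G M1 a Ga) |].
      split; [exact (GiXi _ _ G2G M2 b Gb) | exact E].
    - intros [a [b [[_ Ga] [[_ Gb] ->]]]]. exact (GM _ _ Ga Gb). }
  split; [exact GX |]. split.
  { intros x1 x2 H1 H2. apply comm_eq1, X12; assumption. }
  intro x; split.
  - intros [[Hx1 Gx] [Hx2 _]]. split; [exact Gx |].
    intros h Gh. apply (commute_prodset _ x X1 X2); [| | exact (proj1 (GX h) Gh)].
    + intros a Xa. apply commute_sym, X12; [exact Xa | split; assumption].
    + intros b Xb. apply X12; [split; assumption | exact Xb].
  - intros Zx. assert (ZTx := center_sub_centerT _ _ Hdiv Hpow x Zx).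
    destruct Zx as [Gx _].
    split; split; try exact Gx; apply center_sub_prodset; assumption.
Qed.
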